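(* Let $\psi:A\to A'$ be a contraction of dimer algebras (of dimer quivers $Q$, $Q'$ on a torus, obtained by contracting a set of arrows $Q_1^*\subseteq Q_1$), and suppose $Q'$ has a perfect matching. Then no unit cycle of $Q$ is contracted to a vertex by $\psi$; that is, no unit cycle of $Q$ has all of its arrows in $Q_1^*$.
   Context: $k$ is an algebraically closed field. A dimer quiver on a torus is a finite quiver $Q$ embedded in $T^2$ such that each connected component of $T^2\setminus Q$ is simply connected and bounded by an oriented cycle (a unit cycle). Paths compose right to left. The dimer algebra is $A=kQ/I$, $I=\langle p-q\mid\exists a\in Q_1: ap,aq\text{ unit cycles}\rangle$. A perfect matching is a set of arrows containing exactly one arrow of each unit cycle. Contractions: for $Q_1^*\subseteq Q_1$, $Q'$ is obtained by removing each arrow of $Q_1^*$ and identifying its head and tail; $\psi:kQ\to kQ'$ is the $k$-linear map sending vertices to their images, arrows not in $Q_1^*$ to themselves, $\delta\in Q_1^*$ to $e_{\operatorname{t}(\delta)}$, multiplicative on paths. If $Q'$ is a dimer quiver with dimer algebra $A'=kQ'/I'$ and $\psi(I)\subseteq I'$, $\psi$ is called a contraction of dimer algebras. *)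

From HB Require Import structures.
From mathcomp Require Import all_boot all_order all_algebra.
From mathcomp Require Import fingroup perm.
Set Implicit Arguments. Unset Strict Implicit. Unset Printing Implicit Defensive.
Import GRing.Theory.
Local Open Scope ring_scope.

(* A quiver with finite vertex type V and arrow type E, together with the two
   face permutations of a cellular embedding in an oriented surface:
   [sigp a] (resp. [sigm a]) is the arrow following [a] on the boundary of the
   unique "positive" (resp. "negative") face (unit cycle) containing [a]. *)
Record dimer (V E : finType) := Dimer {
  tl : E -> V;
  hd : E -> V;
  sigp : {perm E};
  sigm : {perm E}
}.

Section DimerDefs.
Variables (V E : finType) (D : dimer V E).

Definition adj : rel V :=
  fun x y => [exists a, ((tl D a == x) && (hd D a == y)) || ((hd D a == x) && (tl D a == y))].

(* rotation around a vertex, acting on incoming arrows *)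
Definition rot (a : E) : E := ((sigm D)^-1)%g (sigp D a).

(* D is a dimer quiver on a torus: the faces glue to a closed oriented
   surface (unit cycles are oriented cycles, each vertex has a single disc
   neighbourhood), the quiver is connected, and Euler characteristic
   V - E + F = 0, F = #positive faces + #negative faces. *)
Definition is_torus_dimer : Prop :=
  (forall a, tl D (sigp D a) = hd D a) /\
  (forall a, tl D (sigm D a) = hd D a) /\
  (0 < #|V|)%N /\
  (forall v, exists a, hd D a = v) /\
  (forall a b, hd D a = hd D b -> fconnect rot a b) /\
  (forall u v, connect adj u v) /\
  (#|V| + (fcard (sigp D) predT + fcard (sigm D) predT) = #|E|)%N.

Definition perfect_matching (M : {set E}) : Prop :=
  forall a, #|[set b in M | fconnect (sigp D) a b]| = 1%N /\
            #|[set b in M | fconnect (sigm D) a b]| = 1%N.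

(* Paths: (start vertex, arrows in order of traversal). *)
Definition qpath := (V * seq E)%type.

Definition valid (p : qpath) : bool :=
  if p.2 is a :: s then (tl D a == p.1) && sorted (fun b c => hd D b == tl D c) (a :: s)
  else true.

Definition qend (p : qpath) : V := last p.1 (map (hd D) p.2).

Definition pcomp (p q : qpath) : option qpath :=
  if qend p == q.1 then Some (p.1, p.2 ++ q.2) else None.

(* for an arrow a: the paths p with a p the positive / negative unit cycle *)
Definition restp (a : E) : qpath :=
  (hd D a, traject (sigp D) (sigp D a) (fingraph.order (sigp D) a).-1).
Definition restm (a : E) : qpath :=
  (hd D a, traject (sigm D) (sigm D a) (fingraph.order (sigm D) a).-1).

Variable k : fieldType.

Definition coef (L : seq (k * qpath)) (r : qpath) : k :=
  \sum_(x <- L) x.1 * (x.2 == r)%:R.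

Definition ind (o : option qpath) (r : qpath) : k :=
  if o is Some p then (p == r)%:R else 0.

(* the path-algebra product x * p * y (right-to-left: first y, then p, then x) *)
Definition triple (x p y : qpath) : option qpath :=
  obind (fun w => pcomp w x) (pcomp y p).

(* f lies in the two-sided ideal I generated by the p - q (ap, aq unit cycles):
   f is a finite linear combination of x (p - q) y with x, y paths. *)
Definition in_I (f : qpath -> k) : Prop :=
  exists G : seq (k * qpath * E * qpath),
    all (fun t => valid t.1.1.2 && valid t.2) G /\
    forall r, f r = \sum_(t <- G) t.1.1.1 *
                (ind (triple t.1.1.2 (restp t.1.2) t.2) r -
                 ind (triple t.1.1.2 (restm t.1.2) t.2) r).

End DimerDefs.

(* Q' is obtained from Q by contracting the arrows in S:
   pi identifies vertices joined by arrows of S, and j : E -> option E'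
   deletes the arrows of S and is a bijection from the others onto E'. *)
Definition is_contraction (V E V' E' : finType) (D : dimer V E) (S : {set E})
    (D' : dimer V' E') (pi : V -> V') (j : E -> option E') : Prop :=
  (forall a, j a = None <-> a \in S) /\
  (forall a b a', j a = Some a' -> j b = Some a' -> a = b) /\
  (forall a', exists a, j a = Some a') /\
  (forall a a', j a = Some a' -> tl D' a' = pi (tl D a) /\ hd D' a' = pi (hd D a)) /\
  (forall v', exists v, pi v = v') /\
  (forall u v, pi u = pi v <->
        connect (fun x y => [exists a in S, ((tl D a == x) && (hd D a == y))
                                          || ((hd D a == x) && (tl D a == y))]) u v).

Definition psi_path (V E V' E' : finType) (pi : V -> V') (j : E -> option E')
    (p : qpath V E) : qpath V' E' := (pi p.1, pmap j p.2).

Definition psi_lin (k : fieldType) (V E V' E' : finType) (pi : V -> V')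
    (j : E -> option E') (L : seq (k * qpath V E)) : seq (k * qpath V' E') :=
  map (fun x => (x.1, psi_path pi j x.2)) L.

From Pilot Require Import Defs.
From HB Require Import structures.
From mathcomp Require Import all_boot all_order all_algebra.
From mathcomp Require Import fingroup perm.
Set Implicit Arguments. Unset Strict Implicit. Unset Printing Implicit Defensive.
Import GRing.Theory.

(* Pull the perfect matching M of Q' back to Q: an arrow e of Q is marked when
   j e lies in M, and deg e counts the marked arrows on the positive unit cycle
   through e.  Counting arrows of M is a grading of A' for which I' is
   homogeneous, and psi maps each relation p - q of A into I', so the positive
   and negative unit cycles through any arrow of Q carry the same number of
   marked arrows.  Hence deg is invariant under both face permutations, hence
   under rotation about a vertex, hence constant on the connected quiver Q.
   It is positive somewhere since M is nonempty and j is onto, so every unit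
   cycle of Q has a marked arrow, which is not contracted. *)

Section PermOrbit.
Variables (T : finType) (s : {perm T}).

Lemma orbit_cons x : orbit s x = x :: traject s (s x) (fingraph.order s x).-1.
Proof. by rewrite /orbit -orderSpred. Qed.

Lemma count_orbit (p : pred T) x :
  count p (orbit s x) = #|[set y | fconnect s x y & p y]|.
Proof.
rewrite -size_filter -(card_uniqP (filter_uniq _ (orbit_uniq s x))).
by apply: eq_card => y; rewrite mem_filter inE fconnect_orbit andbC.
Qed.

Lemma count_orbit_perm (p : pred T) x : count p (orbit s (s x)) = count p (orbit s x).
Proof.
have /seq.permP-> // : perm_eq (orbit s (s x)) (orbit s x).
apply: uniq_perm; rewrite ?orbit_uniq // => y.
by rewrite -!fconnect_orbit -same_fconnect1 //; apply: perm_inj.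
Qed.

End PermOrbit.

Section DimerPaths.
Variables (V E : finType) (D : dimer V E).

Definition face_path (s : {perm E}) (b : E) : qpath V E :=
  (hd D b, traject s (s b) (fingraph.order s b).-1).

Section FacePath.
Variable s : {perm E}.
Hypothesis tl_s : forall a, tl D (s a) = hd D a.

Lemma qend_face_path b : qend D (face_path s b) = tl D b.
Proof.
rewrite /qend /= -[in RHS](iter_order (@perm_inj _ s) b) -[in RHS]orderSpred.
by rewrite iterS tl_s last_map last_traject.
Qed.

Lemma valid_face_path b : valid D (face_path s b).
Proof.
rewrite /valid /face_path /=; case: (fingraph.order s b).-1 => //= n.
rewrite tl_s eqxx /=.
by apply: sub_path (fpath_traject _ _ _) => x y /eqP <-; rewrite tl_s.
Qed.

End FacePath.

Lemma triple_eq x p y : triple D x p y =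
  if (qend D y == p.1) && (qend D p == x.1) then Some (y.1, y.2 ++ p.2 ++ x.2) else None.
Proof.
rewrite /triple /Defs.pcomp; case: (qend D y =P p.1) => //= yp.
have -> : qend D (y.1, y.2 ++ p.2) = qend D p.
  by rewrite /qend /= map_cat last_cat -yp.
by case: eqP => //; rewrite catA.
Qed.

End DimerPaths.

Lemma count_pmap (T U : Type) (j : T -> option U) (p : pred U) s :
  count p (pmap j s) = count (fun e => oapp p false (j e)) s.
Proof. by elim: s => //= x s IH; case: (j x) => [y|] /=; rewrite IH. Qed.

Section BalancedWeights.
Local Open Scope ring_scope.
Variables (k : fieldType) (V E : finType) (D : dimer V E).

Definition balanced (w : qpath V E -> k) : Prop :=
  forall x a y, oapp w 0 (triple D x (restp D a) y) = oapp w 0 (triple D x (restm D a) y).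

Lemma sum_ind (w : qpath V E -> k) (R : seq (qpath V E)) (o : option (qpath V E)) :
  uniq R -> (forall p, o = Some p -> p \in R) ->
  \sum_(r <- R) w r * ind k o r = oapp w 0 o.
Proof.
case: o => [p|] uR pR /=; last by rewrite big1 // => r _; rewrite mulr0.
rewrite (bigD1_seq p) ?pR //= eqxx mulr1 big1 ?addr0 // => r.
by rewrite eq_sym => /negPf ->; rewrite mulr0.
Qed.

Lemma balanced_annihilates_I (w : qpath V E -> k) (f : qpath V E -> k) :
  balanced w -> in_I D f ->
  exists R, [/\ uniq R, forall r, r \notin R -> f r = 0 & \sum_(r <- R) w r * f r = 0].
Proof.
move=> bal_w [G [_ fE]].
pose gens (t : k * qpath V E * E * qpath V E) :=
  [:: triple D t.1.1.2 (restp D t.1.2) t.2; triple D t.1.1.2 (restm D t.1.2) t.2].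
pose R := undup (flatten [seq pmap id (gens t) | t <- G]).
have genR t p : t \in G -> Some p \in gens t -> p \in R.
  move=> tG pt; rewrite mem_undup; apply/flattenP; exists (pmap id (gens t)).
    exact: (map_f (fun t => pmap id (gens t))).
  by rewrite mem_pmap map_id.
exists R; split; first exact: undup_uniq.
  move=> r rR; rewrite fE big1_seq // => t /andP[_ tG].
  have ind0 o : o \in gens t -> ind k o r = 0.
    case: o => [p|] //= pt; case: eqP => // pr.
    by rewrite -pr (genR t) in rR.
  by rewrite !ind0 ?inE ?eqxx ?orbT // subrr mulr0.
under eq_bigr do rewrite fE mulr_sumr.
rewrite exchange_big big1_seq // => t /andP[_ tG].
under eq_bigr do rewrite mulrCA mulrBr.
rewrite -mulr_sumr sumrB !sum_ind ?undup_uniq ?bal_w ?subrr ?mulr0 // => p pt.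
  by apply: (genR t); rewrite // -pt !inE eqxx ?orbT.
by apply: (genR t); rewrite // -pt !inE eqxx ?orbT.
Qed.

Lemma balanced_eq (w : qpath V E -> k) P Q :
  balanced w -> in_I D (coef [:: (1 : k, P); (-1, Q)]) -> w P = w Q.
Proof.
move=> bal_w /(balanced_annihilates_I bal_w) [R [uR out0 sum0]].
have fE r : coef [:: (1 : k, P); (-1, Q)] r = ind k (Some P) r - ind k (Some Q) r.
  by rewrite /coef !big_cons big_nil /= mul1r mulN1r addr0.
have [->//|PQ] := eqVneq P Q.
have inR p : (p == P) || (p == Q) -> p \in R.
  move=> pPQ; apply: contraT => /out0/eqP; rewrite fE /ind /=.
  have QP : Q != P by rewrite eq_sym.
  case/orP: pPQ => /eqP->; rewrite eqxx ?(negPf PQ) ?(negPf QP) /= mulr1n.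
    by rewrite subr0 oner_eq0.
  by rewrite sub0r oppr_eq0 oner_eq0.
have PR : P \in R by rewrite inR ?eqxx.
have QR : Q \in R by rewrite inR ?eqxx ?orbT.
move: sum0; under eq_bigr do rewrite fE mulrBr.
rewrite sumrB !sum_ind // => [/eqP|? [<-]|? [<-]] //.
by rewrite subr_eq0 => /eqP.
Qed.

End BalancedWeights.

Section PerfectMatching.
Local Open Scope ring_scope.
Variables (k : fieldType) (V E : finType) (D : dimer V E).
Hypotheses (tl_sigp : forall a, tl D (sigp D a) = hd D a)
           (tl_sigm : forall a, tl D (sigm D a) = hd D a).

Lemma unit_cycle_relation_in_I b : in_I D (coef [:: (1 : k, restp D b); (-1, restm D b)]).
Proof.
exists [:: (1, (tl D b, [::]), b, (hd D b, [::]))]; split => // r.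
rewrite /coef !big_cons !big_nil /= !triple_eq.
rewrite (qend_face_path tl_sigp) (qend_face_path tl_sigm) /= !eqxx /= !cats0 /ind.
by rewrite !mul1r mulN1r !addr0.
Qed.

Variable M : {set E}.
Hypothesis M_perfect : perfect_matching D M.

Lemma perfect_matching_nonempty (e : E) : exists m, m \in M.
Proof.
have [M_face _] := M_perfect e.
have : (0 < #|[set b in M | fconnect (sigp D) e b]|)%N by rewrite M_face.
by case/card_gt0P => m; rewrite inE => /andP[mM _]; exists m.
Qed.

Lemma perfect_matching_count_face a :
  count (mem M) (restp D a).2 = count (mem M) (restm D a).2.
Proof.
have [M_facep M_facem] := M_perfect a.
have count1 (s : {perm E}) : #|[set b in M | fconnect s a b]| = 1%N ->
    ((a \in M) + count (mem M) (face_path D s a).2 = 1)%N.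
  move=> <-; have -> : #|[set b in M | fconnect s a b]| = count (mem M) (orbit s a).
    by rewrite count_orbit; apply: eq_card => b; rewrite !inE andbC.
  by rewrite orbit_cons.
by apply: (@addnI (a \in M)); rewrite (count1 _ M_facep) (count1 _ M_facem).
Qed.

Lemma balanced_matching_degree d : balanced D (fun r => (count (mem M) r.2 == d)%:R : k).
Proof.
move=> x a y; rewrite !triple_eq (qend_face_path tl_sigp) (qend_face_path tl_sigm) /=.
by case: ifP => //= _; rewrite !count_cat perfect_matching_count_face.
Qed.

Lemma perfect_matching_degree_eq P Q :
  in_I D (coef [:: (1 : k, P); (-1, Q)]) -> count (mem M) P.2 = count (mem M) Q.2.
Proof.
move/(balanced_eq (balanced_matching_degree (count (mem M) P.2))); rewrite eqxx.
by case: eqP => // _ /eqP; rewrite mulr1n mulr0n oner_eq0.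
Qed.

End PerfectMatching.

Lemma contraction_count_pullback_face (k : fieldType) (V E V' E' : finType)
    (D : dimer V E) (D' : dimer V' E') (pi : V -> V') (j : E -> option E') (M : {set E'}) :
  (forall a, tl D (sigp D a) = hd D a) -> (forall a, tl D (sigm D a) = hd D a) ->
  (forall a, tl D' (sigp D' a) = hd D' a) -> (forall a, tl D' (sigm D' a) = hd D' a) ->
  (forall L : seq (k * qpath V E),
      all (fun x => valid D x.2) L ->
      in_I D (coef L) -> in_I D' (coef (psi_lin pi j L))) ->
  perfect_matching D' M ->
  forall b, count (fun e => oapp (mem M) false (j e)) (restp D b).2 =
            count (fun e => oapp (mem M) false (j e)) (restm D b).2.
Proof.
move=> tl_sigp tl_sigm tl_sigp' tl_sigm' psi_I M_perfect b.
have := psi_I [:: (1%R, restp D b); ((-1)%R, restm D b)].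
rewrite /= (valid_face_path tl_sigp) (valid_face_path tl_sigm).
move=> /(_ isT (unit_cycle_relation_in_I k tl_sigp tl_sigm b)).
by move=> /(perfect_matching_degree_eq tl_sigp' tl_sigm' M_perfect); rewrite !count_pmap.
Qed.

Section FaceInvariant.
Variables (V E : finType) (D : dimer V E).
Hypotheses (tl_sigp : forall a, tl D (sigp D a) = hd D a)
           (hd_onto : forall v, exists a, hd D a = v)
           (rot_connected : forall a b, hd D a = hd D b -> fconnect (Defs.rot D) a b)
           (adj_connected : forall u v, connect (adj D) u v).
Variables (T : eqType) (f : E -> T).
Hypotheses (f_sigp : forall e, f (sigp D e) = f e) (f_sigm : forall e, f (sigm D e) = f e).

Lemma face_invariant_rot e : f (Defs.rot D e) = f e.
Proof. by rewrite /Defs.rot -f_sigm permKV f_sigp. Qed.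

Lemma face_invariant_hd a b : hd D a = hd D b -> f a = f b.
Proof.
move/rot_connected; rewrite fconnect_orbit => /trajectP[i _ ->].
by elim: i => //= i ->; rewrite face_invariant_rot.
Qed.

Lemma face_invariant_tl a c : hd D a = tl D c -> f a = f c.
Proof.
move=> ac; rewrite -[c](permKV (sigp D)) f_sigp.
by apply: face_invariant_hd; rewrite ac -tl_sigp permKV.
Qed.

Lemma face_invariant_adj x y a b : adj D x y -> hd D a = x -> hd D b = y -> f a = f b.
Proof.
case/existsP=> c /orP[] /andP[/eqP <- /eqP <-] ax bx.
  by rewrite (face_invariant_tl ax) (face_invariant_hd bx).
by rewrite (face_invariant_hd ax) (face_invariant_tl bx).
Qed.

Lemma face_invariant_const a b : f a = f b.
Proof.
pose P := [pred v | [forall e, (hd D e == v) ==> (f e == f a)]].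
have PE v e : hd D e = v -> (v \in P) = (f e == f a).
  move=> ev; apply/forallP/eqP => [/(_ e)|fe e'].
    by rewrite ev eqxx => /eqP.
  by apply/implyP => /eqP e'v; rewrite (face_invariant_hd (etrans e'v (esym ev))) fe.
have P_closed : closed (adj D) P.
  move=> x y xy; have [ax ax_x] := hd_onto x; have [ay ay_y] := hd_onto y.
  by rewrite (PE x ax ax_x) (PE y ay ay_y) (face_invariant_adj xy ax_x ay_y).
apply/esym/eqP; rewrite -(PE _ b erefl).
by rewrite -(closed_connect P_closed (adj_connected (hd D a) _)) (PE _ a erefl).
Qed.

End FaceInvariant.

Theorem lemma3p5 (k : closedFieldType) (V E V' E' : finType)
    (D : dimer V E) (D' : dimer V' E') (S : {set E})
    (pi : V -> V') (j : E -> option E') :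
  is_torus_dimer D -> is_torus_dimer D' ->
  is_contraction D S D' pi j ->
  (* psi(I) is contained in I' *)
  (forall L : seq (k * qpath V E),
      all (fun x => valid D x.2) L ->
      in_I D (coef L) -> in_I D' (coef (psi_lin pi j L))) ->
  (exists M : {set E'}, perfect_matching D' M) ->
  forall a : E,
    ~ (forall b, fconnect (sigp D) a b -> b \in S) /\
    ~ (forall b, fconnect (sigm D) a b -> b \in S).
Proof.
move=> [tl_sigp [tl_sigm [_ [hd_onto [rot_conn [adj_conn _]]]]]].
move=> [tl_sigp' [tl_sigm' [V'_gt0 [hd_onto' _]]]] [j_None [_ [j_onto _]]] psi_I [M M_perfect] a.
pose phi e := oapp (mem M) false (j e).
pose deg e := count phi (orbit (sigp D) e).
have deg_sigm e : deg e = count phi (orbit (sigm D) e).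
  rewrite /deg !orbit_cons /=.
  by rewrite (contraction_count_pullback_face tl_sigp tl_sigm tl_sigp' tl_sigm' psi_I M_perfect).
have deg_const e : deg e = deg a.
  apply: (face_invariant_const tl_sigp hd_onto rot_conn adj_conn) => {}e.
    exact: count_orbit_perm.
  by rewrite !deg_sigm count_orbit_perm.
have [e deg_e] : exists e, 0 < deg e.
  have [v' _] := card_gt0P V'_gt0; have [e' _] := hd_onto' v'.
  have [m mM] := perfect_matching_nonempty M_perfect e'; have [e je] := j_onto m.
  by exists e; rewrite /deg orbit_cons /= /phi je /= mM.
have deg0 s : (forall b, fconnect s a b -> b \in S) -> count phi (orbit s a) = 0.
  move=> face_S; apply/eqP; rewrite eqn0Ngt -has_count; apply/hasPn => b.
  by rewrite -fconnect_orbit => /face_S/j_None; rewrite /phi => ->.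
split=> /deg0 face0; move: deg_e; rewrite deg_const.
  by rewrite /deg face0.
by rewrite deg_sigm face0.
Qed.
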